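(* Let $n\ge1$ and let $P=\{(i,j)\colon 1\le i\le j\le n\}$ be the shifted staircase. Fix $0\le k\le n-1$ and let $B=\{(i,j)\in P\colon j-i=k\}$. Then $\sum_{p\in B}\mathbb{1}_p\equiv (n-k)/2$.
   Context: $P$ is ordered by $(i,j)\le(i',j')$ iff $i\le i'$ and $j\le j'$. $\mathcal{J}(P)$ is the set of order ideals of $P$. For $x\in P$, $I\in\mathcal{J}(P)$: $\mathbb{1}_x(I)=1$ if $x\in I$, else $0$; $T_x^+(I)=1$ if $x$ is a minimal element of $P\setminus I$, else $0$; $T_x^-(I)=1$ if $x$ is a maximal element of $I$, else $0$; $T_x=T_x^+-T_x^-$. For $f,g\colon\mathcal{J}(P)\to\mathbb{R}$, $f\equiv g$ means $f-g=\sum_{x\in P}c_xT_x$ for some real constants $c_x$; a real number denotes the corresponding constant function. *)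

From mathcomp Require Import all_boot all_order all_algebra.
From mathcomp Require Import reals.
Set Implicit Arguments. Unset Strict Implicit. Unset Printing Implicit Defensive.
Import Order.TTheory GRing.Theory Num.Theory.

(* Shifted staircase P = {(i,j) : 1 <= i <= j <= n}, encoded 0-based:
   (i,j) is represented by (i-1, j-1) : 'I_n * 'I_n with i-1 <= j-1. *)
Definition stair (n : nat) := {x : 'I_n * 'I_n | (x.1 <= x.2)%N}.

Definition sle n (x y : stair n) : bool :=
  ((val x).1 <= (val y).1)%N && ((val x).2 <= (val y).2)%N.

Definition slt n (x y : stair n) : bool := (x != y) && sle x y.

Definition is_ideal n (I : {set stair n}) : Prop :=
  forall x y : stair n, y \in I -> sle x y -> x \in I.

Local Open Scope ring_scope.

Definition ind (R : realType) n (x : stair n) (I : {set stair n}) : R :=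
  (x \in I)%:R.

Definition Tplus (R : realType) n (x : stair n) (I : {set stair n}) : R :=
  ((x \notin I) && [forall y, slt y x ==> (y \in I)])%:R.

Definition Tminus (R : realType) n (x : stair n) (I : {set stair n}) : R :=
  ((x \in I) && [forall y, slt x y ==> (y \notin I)])%:R.

Definition toggle (R : realType) n (x : stair n) (I : {set stair n}) : R :=
  Tplus R x I - Tminus R x I.

Definition toggle_equiv (R : realType) n (f g : {set stair n} -> R) : Prop :=
  exists c : stair n -> R, forall I : {set stair n}, is_ideal I ->
    f I - g I = \sum_(x : stair n) c x * toggle R x I.

From mathcomp Require Import all_boot all_order all_algebra.
From mathcomp Require Import reals ring lra zify.
Import Order.TTheory GRing.Theory Num.Theory.
Set Implicit Arguments. Unset Strict Implicit.
Local Open Scope ring_scope.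

(* Let S_d(I) be the number of elements of I on the diagonal j - i = d.  For i < j the
   toggles T+ at (i+1, j+1) and T- at (i, j) both contain the event "(i+1, j) and (i, j+1)
   lie in I", which cancels in their difference and leaves
   1_(i+1,j) + 1_(i,j+1) - 1_(i,j) - 1_(i+1,j+1).  Summing the toggles along the diagonal
   d > 0 therefore gives the second difference S_(d-1) - 2 S_d + S_(d+1); along the main
   diagonal, whose points have a single lower and a single upper cover and where T+ at the
   minimum contributes the constant, it gives 1 - 2 S_0 + 2 S_1.  All these expressions are
   thus ≡ 0, and summing them against the Green function max(d, k) - n of the discrete
   Laplacian (halved at d = 0) leaves S_k - (n - k)/2. *)

Lemma sum_stair_diag (V : nmodType) n (F : nat -> nat -> V) :
  (forall a b, (n <= b)%N -> F a b = 0) ->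
  \sum_(x : stair n) F (val x).1 (val x).2 =
  \sum_(0 <= d < n) \sum_(0 <= a < n) F a (a + d)%N.
Proof.
move=> F_out.
have row_diag (i : 'I_n) :
    \sum_(j < n | (i <= j)%N) F i j = \sum_(0 <= d < n) F i (i + d)%N.
  rewrite [RHS](big_cat_nat _ (leq_subr i n)) //= [X in _ = _ + X]big_nat_cond.
  rewrite [X in _ = _ + X]big1 ?addr0 => [|d /andP[/andP[le_d _] _]]; last first.
    by apply: F_out; lia.
  under [RHS]eq_bigr do rewrite addnC.
  rewrite -(big_addn 0 n i xpredT (F i)) add0n.
  by rewrite big_geq_mkord.
rewrite exchange_big /= big_mkord.
transitivity (\sum_(i < n) \sum_(j < n | (i <= j)%N) F i j).
  rewrite pair_big_dep /= (reindex_omap (val : stair n -> _) insub) => [|p le_p].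
    by apply: eq_bigl => x; rewrite (valP x) valK eqxx.
  by rewrite insubT.
by apply: eq_bigr => i _; rewrite row_diag.
Qed.

Lemma sumr_nat_shift (V : nmodType) n (h : nat -> V) : h n = 0 ->
  \sum_(0 <= a < n) h a = h 0%N + \sum_(0 <= a < n) h a.+1.
Proof. by move=> hn0; rewrite -big_nat_recl // big_nat_recr //= hn0 addr0. Qed.

Definition diag_laplacian (R : nzRingType) (S : nat -> R) d : R :=
  if d is e.+1 then S e - S d *+ 2 + S d.+1 else 1 - S 0%N *+ 2 + S 1%N *+ 2.

Lemma summation_by_parts2 (R : comNzRingType) (g S : nat -> R) N :
  \sum_(0 <= d < N) g d.+1 * (S d - S d.+1 *+ 2 + S d.+2) =
  \sum_(0 <= d < N) S d.+1 * (g d - g d.+1 *+ 2 + g d.+2)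
  + g 1%N * S 0%N - g 0%N * S 1%N + g N * S N.+1 - g N.+1 * S N.
Proof.
elim: N => [|N IH]; first by rewrite !big_geq //; ring.
by rewrite !big_nat_recr //= IH; ring.
Qed.

Lemma maxn_second_diff d k :
  (maxn d k + maxn d.+2 k = (maxn d.+1 k).*2 + (d.+1 == k))%N.
Proof. by case: eqP; lia. Qed.

Definition diag_weight (R : realFieldType) n k d : R :=
  if d is _.+1 then (maxn d k)%:R - n%:R else (k%:R - n%:R) / 2.

Lemma sum_weighted_laplacian (R : realFieldType) n k (S : nat -> R) :
  (k < n)%N -> S n = 0 ->
  \sum_(0 <= d < n) diag_weight R n k d * diag_laplacian S d = S k - (n - k)%:R / 2.
Proof.
case: n => [//|N] lt_kN SN0; rewrite big_nat_recl //=.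
pose g d : R := (maxn d k)%:R - N.+1%:R.
have g_second d : g d - g d.+1 *+ 2 + g d.+2 = (d.+1 == k)%:R.
  have := congr1 (fun m => m%:R : R) (maxn_second_diff d k).
  by rewrite /= !natrD -muln2 natrM /g; lra.
have -> : \sum_(0 <= d < N) diag_weight R N.+1 k d.+1 * diag_laplacian S d.+1 =
    \sum_(0 <= d < N) g d.+1 * (S d - S d.+1 *+ 2 + S d.+2) by [].
rewrite summation_by_parts2.
under eq_bigr do rewrite g_second mulr_natr mulrb.
rewrite -big_mkcond -(big_add1 _ _ 0 N.+1 (pred1 k)) big_nat1_eq SN0 /g.
have -> : maxn N.+1 k = N.+1 by apply/maxn_idPl; lia.
rewrite natrB; last by lia.
have [-> | k_pos] := posnP k; first by rewrite !maxn0 /=; lra.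
have -> : maxn 1 k = k by apply/maxn_idPr.
by rewrite max0n ifT; [lra | lia].
Qed.

Section Ideal.
Variables (n : nat) (I : {set stair n}).
Hypothesis I_ideal : is_ideal I.

Definition inI (a b : nat) : bool :=
  [exists x in I, ((val x).1 == a :> nat) && ((val x).2 == b :> nat)].

Definition stair_at a b (le_ab : (a <= b)%N) (lt_bn : (b < n)%N) : stair n :=
  exist _ (Ordinal (leq_ltn_trans le_ab lt_bn), Ordinal lt_bn) le_ab.

Lemma stair_coord_inj (x y : stair n) :
  (val x).1 = (val y).1 :> nat -> (val x).2 = (val y).2 :> nat -> x = y.
Proof.
move: x y => [[a b] ?] [[c d] ?] /= /val_inj eq_ac /val_inj eq_bd.
by apply: val_inj; rewrite /= eq_ac eq_bd.
Qed.

Lemma inI_bound a b : inI a b -> (a <= b < n)%N.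
Proof. by case/exists_inP=> x _ /andP[/eqP <- /eqP <-]; rewrite (valP x) /=. Qed.

Lemma inI_out a b : (n <= b)%N -> inI a b = false.
Proof. by move=> le_nb; apply: contraTF le_nb => /inI_bound; lia. Qed.

Lemma inI_stair (x : stair n) : inI (val x).1 (val x).2 = (x \in I).
Proof.
apply/exists_inP/idP => [[y yI /andP[/eqP eq1 /eqP eq2]]|xI].
  by rewrite -(stair_coord_inj eq1 eq2).
by exists x; rewrite ?eqxx.
Qed.

Lemma inI_at a b le_ab lt_bn : inI a b = (@stair_at a b le_ab lt_bn \in I).
Proof. by rewrite -inI_stair. Qed.

Lemma inI_down a b a' b' :
  inI a b -> (a' <= a)%N -> (b' <= b)%N -> (a' <= b')%N -> inI a' b'.
Proof.
move=> abI le_a le_b le_ab'; have /andP[_ lt_bn] := inI_bound abI.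
have lt_bn' : (b' < n)%N by lia.
case/exists_inP: abI => x xI /andP[/eqP eq1 /eqP eq2].
by rewrite (inI_at le_ab' lt_bn'); apply: I_ideal xI _; rewrite /sle /= eq1 eq2 le_a le_b.
Qed.

Lemma slt_coord (y x : stair n) : slt y x =
  [&& ((val y).1 != (val x).1 :> nat) || ((val y).2 != (val x).2 :> nat),
      ((val y).1 <= (val x).1)%N & ((val y).2 <= (val x).2)%N].
Proof.
rewrite /slt /sle; congr (_ && _); apply/idP/idP.
  apply: contraNT; rewrite negb_or !negbK => /andP[/eqP eq1 /eqP eq2].
  exact/eqP/stair_coord_inj.
by apply: contraTneq => ->; rewrite !eqxx.
Qed.

Lemma all_below_inE (x : stair n) :
  [forall y, slt y x ==> (y \in I)] =
  ((((val x).1 == 0 :> nat) || inI (val x).1.-1 (val x).2) &&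
   (((val x).1 == (val x).2 :> nat) || inI (val x).1 (val x).2.-1)).
Proof.
case: x => [[a b] /= le_ab] /=; have lt_bn := ltn_ord b.
apply/forallP/andP => [below | [a_low b_low] [[c d] /= le_cd]].
  have below_in (a' b' : nat) :
      [&& (a' != a :> nat) || (b' != b :> nat), a' <= a & b' <= b]%N ->
      (a' <= b')%N -> inI a' b'.
    move=> lt_x le'; have lt' : (b' < n)%N by lia.
    by rewrite (inI_at le' lt'); apply: (implyP (below _)); rewrite slt_coord.
  by split; case: eqP => //= neq; apply: below_in; lia.
apply/implyP; rewrite slt_coord -inI_stair /= => /and3P[neq le_ca le_db].
have [lt_ca|le_ac] := ltnP c a.
  by move: a_low; case: eqP => [+ _|_ low]; [lia | apply: (inI_down low); lia].
by move: b_low; case: eqP => [+ _|_ low]; [lia | apply: (inI_down low); lia].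
Qed.

Lemma all_above_outE (x : stair n) :
  [forall y, slt x y ==> (y \notin I)] =
  ~~ inI (val x).1.+1 (val x).2 && ~~ inI (val x).1 (val x).2.+1.
Proof.
case: x => [[a b] /= le_ab] /=.
apply/forallP/andP => [above | [a_up b_up] [[c d] /= le_cd]].
  have above_out (a' b' : nat) : inI a' b' ->
      [&& (a != a' :> nat) || (b != b' :> nat), a <= a' & b <= b']%N -> False.
    move=> abI lt_x; have /andP[le' lt'] := inI_bound abI.
    by move: (implyP (above (stair_at le' lt'))); rewrite slt_coord -inI_at abI => /(_ lt_x).
  by split; apply/negP => /above_out; apply; lia.
apply/implyP; rewrite slt_coord -inI_stair /= => /and3P[neq le_ac le_bd].
apply/negP => cdI; have lt_dn := ltn_ord d.
have [lt_bd|le_db] := ltnP b d.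
  by move/negP: b_up; apply; apply: (inI_down cdI); lia.
by move/negP: a_up; apply; apply: (inI_down cdI); lia.
Qed.

(* The guard b < n matters: inI vanishes outside the staircase, so without it points
   beyond the last column could pass the cover test. *)
Definition minimal_out a b : bool :=
  [&& (b < n)%N, ~~ inI a b, (a == 0)%N || inI a.-1 b & (a == b) || inI a b.-1].

Definition maximal_in a b : bool := [&& inI a b, ~~ inI a.+1 b & ~~ inI a b.+1].

Lemma toggle_stairE (R : realType) (x : stair n) :
  toggle R x I =
  (minimal_out (val x).1 (val x).2)%:R - (maximal_in (val x).1 (val x).2)%:R.
Proof.
by rewrite /toggle /Tplus /Tminus all_below_inE all_above_outE -inI_stair /minimal_out ltn_ord.
Qed.

Section Counting.
Variable R : comNzRingType.

Definition chi a b : R := (inI a b)%:R.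

Definition diag_count e : R := \sum_(0 <= a < n) chi a (a + e).

Lemma chi_out a b : (n <= b)%N -> chi a b = 0.
Proof. by move=> le_nb; rewrite /chi inI_out. Qed.

Lemma toggle_pair a b : (a < b)%N ->
  (minimal_out a.+1 b.+1)%:R - (maximal_in a b)%:R =
  chi a.+1 b + chi a b.+1 - chi a b - chi a.+1 b.+1.
Proof.
move=> lt_ab; rewrite /minimal_out /maximal_in /chi /= eqSS ltn_eqF //=.
have : [&& inI a.+1 b ==> inI a b, inI a b.+1 ==> inI a b,
    inI a.+1 b.+1 ==> inI a.+1 b, inI a.+1 b.+1 ==> inI a b.+1
  & inI a b.+1 ==> (b.+1 < n)%N].
  by apply/and5P; split; apply/implyP;
    first [move/inI_bound; lia | move=> abI; apply: (inI_down abI); lia].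
case: (inI a b); case: (inI a.+1 b); case: (inI a b.+1); case: (inI a.+1 b.+1);
  case: (b.+1 < n)%N => //= _; ring.
Qed.

Lemma toggle_pair_diag a :
  (minimal_out a.+1 a.+1)%:R - (maximal_in a a)%:R =
  chi a a.+1 *+ 2 - chi a a - chi a.+1 a.+1.
Proof.
rewrite /minimal_out /maximal_in /chi /= eqxx.
have -> : inI a.+1 a = false by apply: contraTF isT => /inI_bound; lia.
have : [&& inI a a.+1 ==> inI a a, inI a.+1 a.+1 ==> inI a a.+1
  & inI a a.+1 ==> (a.+1 < n)%N].
  by apply/and3P; split; apply/implyP;
    first [move/inI_bound; lia | move=> abI; apply: (inI_down abI); lia].
case: (inI a a); case: (inI a a.+1); case: (inI a.+1 a.+1); case: (a.+1 < n)%N => //= _; ring.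
Qed.

Lemma minimal_out_first d : (d < n)%N ->
  (minimal_out 0 d)%:R = if d is e.+1 then chi 0 e - chi 0 d else 1 - chi 0 0.
Proof.
rewrite /minimal_out /chi => lt_dn; rewrite lt_dn; case: d lt_dn => [|e] lt_dn /=.
  by case: (inI 0 0) => /=; ring.
have : inI 0 e.+1 ==> inI 0 e by apply/implyP => abI; apply: (inI_down abI); lia.
by case: (inI 0 e); case: (inI 0 e.+1) => //= _; ring.
Qed.

Lemma diag_count_succ e :
  \sum_(0 <= a < n) chi a.+1 (a.+1 + e) = diag_count e - chi 0 e.
Proof.
rewrite /diag_count (@sumr_nat_shift _ _ (fun a => chi a (a + e))) /=.
  by rewrite add0n addrAC subrr add0r.
exact/chi_out/leq_addr.
Qed.

Lemma sum_toggle_diag d : (d < n)%N ->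
  \sum_(0 <= a < n) ((minimal_out a (a + d))%:R - (maximal_in a (a + d))%:R) =
  diag_laplacian diag_count d.
Proof.
move=> lt_dn; rewrite sumrB.
rewrite (@sumr_nat_shift _ _ (fun a => (minimal_out a (a + d))%:R)); last first.
  by rewrite /minimal_out ltnNge leq_addr.
rewrite -addrA -sumrB minimal_out_first //; case: d lt_dn => [|e] lt_dn /=.
  transitivity (1 - chi 0 0 + \sum_(0 <= a < n)
      (chi a (a + 1) *+ 2 - chi a (a + 0) - chi a.+1 (a.+1 + 0))).
    by congr (_ + _); apply: eq_bigr => a _; rewrite !addn0 addn1 toggle_pair_diag.
  by rewrite !sumrB diag_count_succ /diag_count sumrMnl; ring.
transitivity (chi 0 e - chi 0 e.+1 + \sum_(0 <= a < n)
    (chi a.+1 (a.+1 + e) + chi a (a + e.+2) - chi a (a + e.+1) - chi a.+1 (a.+1 + e.+1))).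
  congr (_ + _); apply: eq_bigr => a _.
  by rewrite addSn toggle_pair ?addSnnS -?addnS //; lia.
by rewrite !sumrB big_split /= !diag_count_succ /diag_count; ring.
Qed.

Lemma diag_count_out e : (n <= e)%N -> diag_count e = 0.
Proof.
by move=> le_ne; apply: big1 => a _; rewrite chi_out // (leq_trans le_ne) ?leq_addl.
Qed.

End Counting.

Lemma sum_diag_ind (R : realType) k :
  \sum_(p : stair n | ((val p).2 - (val p).1 == k)%N) ind R p I = diag_count R k.
Proof.
rewrite big_mkcond /=.
under eq_bigr do rewrite /ind -inI_stair -/(chi R _ _).
rewrite (@sum_stair_diag _ _ (fun a b => if (b - a == k)%N then chi R a b else 0)).
  under eq_bigr do under eq_bigr do rewrite addKn.
  rewrite exchange_big /diag_count; apply: eq_bigr => a _.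
  rewrite -big_mkcond big_nat1_eq /=; case: ltnP => // le_nk.
  by rewrite chi_out // (leq_trans le_nk) ?leq_addl.
by move=> a b le_nb; case: ifP; rewrite ?chi_out.
Qed.

Lemma sum_weighted_toggle (R : realType) (w : nat -> R) :
  \sum_(x : stair n) w ((val x).2 - (val x).1)%N * toggle R x I =
  \sum_(0 <= d < n) w d * diag_laplacian (diag_count R) d.
Proof.
under eq_bigr do rewrite toggle_stairE.
rewrite (@sum_stair_diag _ _
  (fun a b => w (b - a)%N * ((minimal_out a b)%:R - (maximal_in a b)%:R))).
  apply: eq_big_nat => d /andP[_ lt_dn]; rewrite -sum_toggle_diag // mulr_sumr.
  by apply: eq_bigr => a _; rewrite addKn.
move=> a b le_nb.
by rewrite /minimal_out /maximal_in ltnNge le_nb inI_out //= subrr mulr0.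
Qed.

End Ideal.

Theorem theorem3p17 (R : realType) (n k : nat) (hn : (1 <= n)%N) (hk : (k <= n.-1)%N) :
  toggle_equiv
    (fun I : {set stair n} =>
       \sum_(p : stair n | ((val p).2 - (val p).1 == k)%N) ind R p I)
    (fun _ => (n - k)%:R / 2).
Proof.
exists (fun x : stair n => diag_weight R n k ((val x).2 - (val x).1)) => I I_ideal.
have lt_kn : (k < n)%N by lia.
rewrite sum_diag_ind (sum_weighted_toggle I_ideal) sum_weighted_laplacian //.
exact: diag_count_out.
Qed.
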